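(* There exists a $4\times 4$ magic square $A$ whose sixteen entries are pairwise distinct strings of length $4$ over $\{0,1,2\}$ (read as decimal numbers, leading zeros allowed), with magic sum $S1=4444$, such that the rotated array $R(A)$ is also a magic square with magic sum $4444$.
   Context: A magic square of order $n$ is an $n\times n$ array of numbers in which the sums of the entries of each row, of each column and of each of the two principal diagonals all equal a common value $S1$ (the magic sum). For an $n\times n$ array $A$ whose entries are digit strings $d_1d_2\cdots d_k$ over $\{0,1,2\}$, the $180^\circ$-rotated array $R(A)$ is defined by $R(A)_{i,j}=\overline{A_{n+1-i,\,n+1-j}}$, where $\overline{d_1\cdots d_k}=d_k\cdots d_1$ is the reversed string. Strings are interpreted as decimal integers. *)

From mathcomp Require Import all_boot.
Set Implicit Arguments. Unset Strict Implicit. Unset Printing Implicit Defensive.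

(* A digit string of length k over {0,1,2}: positions 0..k-1 (d_1 is position 0). *)
Definition dstring (k : nat) := {ffun 'I_k -> 'I_3}.

Definition dval (k : nat) (s : dstring k) : nat :=
  \sum_(i < k) (s i : nat) * 10 ^ (k.-1 - i).

Definition drev (k : nat) (s : dstring k) : dstring k :=
  [ffun i => s (rev_ord i)].

Definition array (n : nat) (T : Type) := 'I_n -> 'I_n -> T.

Definition is_magic (n : nat) (M : array n nat) (S : nat) : Prop :=
  (forall i : 'I_n, \sum_(j < n) M i j = S) /\
  (forall j : 'I_n, \sum_(i < n) M i j = S) /\
  (\sum_(i < n) M i i = S) /\
  (\sum_(i < n) M i (rev_ord i) = S).

Definition val_array (n k : nat) (A : array n (dstring k)) : array n nat :=
  fun i j => dval (A i j).

Definition rot180 (n k : nat) (A : array n (dstring k)) : array n (dstring k) :=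
  fun i j => drev (A (rev_ord i) (rev_ord j)).

From mathcomp Require Import all_boot.
Set Implicit Arguments. Unset Strict Implicit. Unset Printing Implicit Defensive.

(* The witness is an explicit table of digit strings.  Each condition of the
   theorem is reduced to a boolean test on nat-indexed tables (sums over
   [iota], membership in [iota], uniqueness of a list), which is then decided
   by evaluation.  Statements over ['I_n] cannot be evaluated directly:
   enumerating ['I_n] goes through [insub], which matches on the opaque [idP].
   Sums are evaluated after [unlock], since [bigop] is locked. *)

Lemma iota_all_ord (n : nat) (P : pred nat) :
  all P (iota 0 n) -> forall i : 'I_n, P i.
Proof. by move/allP=> P_iota i; apply: P_iota; rewrite mem_iota ltn_ord. Qed.

Lemma sum_ord_nat (n : nat) (G : 'I_n -> nat) (F : nat -> nat) :
  (forall i : 'I_n, G i = F i) -> \sum_(i < n) G i = \sum_(0 <= i < n) F i.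
Proof. by move=> GF; rewrite big_mkord; apply: eq_bigr. Qed.

Lemma uniq_map_inj (T U : eqType) (g : T -> U) (s : seq T) :
  uniq (map g s) -> {in s &, injective g}.
Proof.
elim: s => //= a s IHs /andP[gas uniq_gs] x y.
rewrite !inE => /predU1P[->|xs] /predU1P[->|ys] //.
- by move=> gay; case/negP: gas; rewrite gay map_f.
- by move=> gxa; case/negP: gas; rewrite -gxa map_f.
exact: IHs.
Qed.

Definition dstring_of_digits (k : nat) (s : seq nat) : dstring k :=
  [ffun i : 'I_k => inord (nth 0 s i)].

Definition decimal (k : nat) (s : seq nat) : nat :=
  \sum_(0 <= i < k) nth 0 s i * 10 ^ (k.-1 - i).

Lemma dval_of_digits (k : nat) (s : seq nat) :
  all (gtn 3) s -> dval (dstring_of_digits k s) = decimal k s.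
Proof.
move=> /all_nthP digits_lt3; rewrite /dval /decimal big_mkord.
apply: eq_bigr => i _; rewrite ffunE inordK //.
by case: (ltnP i (size s)) => [|/(nth_default 0)->//]; apply: digits_lt3.
Qed.

Lemma drev_of_digits (k : nat) (s : seq nat) :
  size s = k -> drev (dstring_of_digits k s) = dstring_of_digits k (rev s).
Proof.
by move=> size_s; apply/ffunP=> i; rewrite !ffunE /= nth_rev size_s // ltn_ord.
Qed.

Definition magic_table (n : nat) (f : nat -> nat -> nat) (S : nat) : bool :=
  [&& all (fun i => \sum_(0 <= j < n) f i j == S) (iota 0 n),
      all (fun j => \sum_(0 <= i < n) f i j == S) (iota 0 n),
      \sum_(0 <= i < n) f i i == S &
      \sum_(0 <= i < n) f i (n.-1 - i) == S].

Lemma is_magic_table (n : nat) (M : array n nat) (f : nat -> nat -> nat) (S : nat) :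
  (forall i j : 'I_n, M i j = f i j) -> magic_table n f S -> is_magic M S.
Proof.
move=> Mf /and4P[/iota_all_ord rows /iota_all_ord cols /eqP diag /eqP adiag].
split; [|split; [|split]].
- by move=> i; rewrite (@sum_ord_nat _ _ (f i)) ?(eqP (rows i)).
- by move=> j; rewrite (@sum_ord_nat _ _ (f^~ j)) ?(eqP (cols j)).
- by rewrite (@sum_ord_nat _ _ (fun i => f i i)).
rewrite (@sum_ord_nat _ _ (fun i => f i (n.-1 - i))) // => i.
by rewrite Mf /= subnS -subn1 subnAC subn1.
Qed.

Lemma uniq_table_inj (n : nat) (f : nat -> nat -> nat) :
  uniq [seq f i j | i <- iota 0 n, j <- iota 0 n] ->
  forall i j i' j' : 'I_n, f i j = f i' j' -> i = i' /\ j = j'.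
Proof.
rewrite -(map_allpairs (fun p => f p.1 p.2) pair) => /uniq_map_inj f_inj i j i' j' fij.
have grid_ij (a b : 'I_n) :
    ((a : nat), (b : nat)) \in [seq (x, y) | x <- iota 0 n, y <- iota 0 n].
  by apply: allpairs_f; rewrite mem_iota ltn_ord.
by case: (f_inj _ _ (grid_ij i j) (grid_ij i' j') fij) => /val_inj-> /val_inj->.
Qed.

Definition digit_table : seq (seq (seq nat)) :=
 [:: [:: [:: 2; 0; 1; 0]; [:: 1; 1; 0; 2]; [:: 0; 1; 1; 0]; [:: 1; 2; 2; 2]];
     [:: [:: 1; 2; 2; 0]; [:: 0; 1; 2; 2]; [:: 2; 1; 0; 0]; [:: 1; 0; 0; 2]];
     [:: [:: 1; 2; 0; 2]; [:: 1; 1; 1; 0]; [:: 1; 1; 1; 2]; [:: 1; 0; 2; 0]];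
     [:: [:: 0; 0; 1; 2]; [:: 2; 1; 1; 0]; [:: 1; 1; 2; 2]; [:: 1; 2; 0; 0]]].

Definition digits (i j : nat) : seq nat := nth [::] (nth [::] digit_table i) j.

Definition square : array 4 (dstring 4) :=
  fun i j => dstring_of_digits 4 (digits i j).

Definition entry (i j : nat) : nat := decimal 4 (digits i j).

Definition rot180_entry (i j : nat) : nat := decimal 4 (rev (digits (3 - i) (3 - j))).

Lemma digits_wf (i j : 'I_4) : (size (digits i j) == 4) && all (gtn 3) (digits i j).
Proof.
have wf : all (fun i => all (fun j => (size (digits i j) == 4) && all (gtn 3) (digits i j))
                          (iota 0 4)) (iota 0 4) by [].
exact: iota_all_ord (iota_all_ord wf i) j.
Qed.

Lemma val_square (i j : 'I_4) : val_array square i j = entry i j.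
Proof. by case/andP: (digits_wf i j) => _; apply: dval_of_digits. Qed.

Lemma val_rot180_square (i j : 'I_4) : val_array (rot180 square) i j = rot180_entry i j.
Proof.
case/andP: (digits_wf (rev_ord i) (rev_ord j)) => /eqP size_d all_d.
by rewrite /val_array /rot180 drev_of_digits // dval_of_digits ?all_rev.
Qed.

Lemma square_inj (i j i' j' : 'I_4) : square i j = square i' j' -> i = i' /\ j = j'.
Proof.
move/(congr1 (@dval 4)); rewrite -!/(val_array square _ _) !val_square.
by apply: uniq_table_inj; rewrite /entry /decimal unlock.
Qed.

Lemma square_magic : is_magic (val_array square) 4444.
Proof.
by apply: (is_magic_table val_square); rewrite /magic_table /entry /decimal unlock; vm_compute.
Qed.

Lemma rot180_square_magic : is_magic (val_array (rot180 square)) 4444.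
Proof.
apply: (is_magic_table val_rot180_square).
by rewrite /magic_table /rot180_entry /decimal unlock; vm_compute.
Qed.

Theorem mainTheorem2 :
  exists A : array 4 (dstring 4),
    (forall i j i' j' : 'I_4, A i j = A i' j' -> i = i' /\ j = j') /\
    is_magic (val_array A) 4444 /\
    is_magic (val_array (rot180 A)) 4444.
Proof.
exists square; split; [exact: square_inj | split].
- exact: square_magic.
exact: rot180_square_magic.
Qed.
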